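(* Let $s\in\mathscr S_+$ and let $\operatorname{supp}(s)=X_0\amalg X_1\amalg\cdots\amalg X_k$ be its interval decomposition, with $l_i:=\#X_i$ for $i\in[0,k]$. Then $$\mathfrak d(s)=l_0+2\left\lceil \tfrac{l_1}{2}\right\rceil+\cdots+2\left\lceil \tfrac{l_k}{2}\right\rceil .$$
   Context: $\omega$ denotes the natural numbers including $0$; $[n,m]=\{x\in\omega:n\le x\le m\}$, $[m]=[1,m]$. A finite sign sequence is $s=(s_i)_{i\in\omega}\in\{-,0,+\}^\omega$ with only finitely many nonzero entries; $\mathscr S$ is the set of all of them; $\operatorname{supp}(s)=\{i:s_i\ne0\}$; $\mathscr S_+=\mathscr S\cap\{0,+\}^\omega$. $\mathrm{SC}(t)$ is the number of pairs $i<j$ with $\{t_i,t_j\}=\{-,+\}$ and $t_k=0$ for all $i<k<j$. For $s\in\mathscr S_+$, $\mathfrak d(s)=\max\{\mathrm{SC}(t): t\in\mathscr S,\ t_i\in\{-,0,s_i\}\ \forall i\}$. The interval decomposition of $s\in\mathscr S_+$ is the unique decomposition $\operatorname{supp}(s)=X_0\amalg\cdots\amalg X_k$ such that each $X_i$ is an interval of $\omega$; $0\in X_0$ if $0\in\operatorname{supp}(s)$ and $X_0=\emptyset$ otherwise; $X_i\neq\emptyset$ for $i\in[k]$; and $\min X_i-\max X_{i-1}\ge 2$ for $i\in[k]$ (with $\max\emptyset=-\infty$). *)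

From mathcomp Require Import all_boot.
Set Implicit Arguments. Unset Strict Implicit. Unset Printing Implicit Defensive.

Inductive sign := Minus | Zero | Plus.

Definition is_zero (a : sign) : bool := if a is Zero then true else false.
Definition is_minus (a : sign) : bool := if a is Minus then true else false.

Definition opp_signs (a b : sign) : bool :=
  match a, b with Minus, Plus | Plus, Minus => true | _, _ => false end.

(* A finite sign sequence is represented by a finite list t; its i-th entry
   is [nth Zero t i] (entries beyond the list are 0).  Every element of
   \mathscr S arises this way. *)
Definition entry (t : seq sign) (i : nat) : sign := nth Zero t i.

Definition supp (t : seq sign) (i : nat) : bool := ~~ is_zero (entry t i).

Definition in_Splus (s : seq sign) : Prop := forall i, ~~ is_minus (entry s i).

(* SC(t): number of pairs i<j with {t_i,t_j}={-,+} and t_k=0 for i<k<j.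
   Pairs with j >= size t never count since then t_j = 0. *)
Definition SC (t : seq sign) : nat :=
  \sum_(0 <= j < size t) \sum_(0 <= i < j)
     [&& opp_signs (entry t i) (entry t j)
       & all (fun k => is_zero (entry t k)) (iota i.+1 (j - i.+1))].

Definition compatible (s t : seq sign) : Prop :=
  forall i, entry t i = Minus \/ entry t i = Zero \/ entry t i = entry s i.

Definition dfrak_is (s : seq sign) (n : nat) : Prop :=
  (exists2 t, compatible s t & SC t = n) /\
  (forall t, compatible s t -> SC t <= n).

Definition is_interval (X : pred nat) : Prop :=
  forall x y z, x <= y <= z -> X x -> X z -> X y.

Definition interval_decomposition (s : seq sign) (k : nat) (X : nat -> pred nat)
  : Prop :=
  (forall i, i <= k -> is_interval (X i)) /\
  [/\
      forall x, supp s x <-> exists2 i, i <= k & X i x,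
      forall i j x, i <= k -> j <= k -> i != j -> X i x -> X j x -> False,
      (if supp s 0 then is_true (X 0 0) else forall x, ~~ X 0 x),
      forall i, 1 <= i <= k -> exists x, X i x
    &
      forall i x y, 1 <= i <= k -> X i x -> X i.-1 y -> y + 2 <= x ].

(* #X for X contained in supp(s) \subseteq [0, size s). *)
Definition card_in (s : seq sign) (X : pred nat) : nat :=
  count X (iota 0 (size s)).

From mathcomp Require Import all_boot zify.
Set Implicit Arguments. Unset Strict Implicit.

(* SC counts the pairs of opposite nonzero signs that become adjacent once the
   zeros are deleted, so the gain of choosing t_i depends only on the last
   nonzero sign L chosen before i.  Hence d(s) is the value at L = 0 of a
   dynamic programme over the suffixes of s.  For s in S_+ the optimum
   alternates signs along each run of +'s: a run of length l earns 2⌈l/2⌉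
   changes, using a - placed in the gap before it, except a run starting at 0,
   which has no gap before it and earns only l. *)

Fixpoint first_nonzero (t : seq sign) : sign :=
  if t is a :: t' then (if a is Zero then first_nonzero t' else a) else Zero.

Lemma all_iota_entry_cons (P : pred sign) b t m n :
  all (fun k => P (entry (b :: t) k)) (iota m.+1 n)
  = all (fun k => P (entry t k)) (iota m n).
Proof. by rewrite -addn1 addnC iotaDl all_map. Qed.

Lemma sum_first_change a t :
  \sum_(0 <= j < size t)
     (opp_signs a (entry t j) && all (fun k => is_zero (entry t k)) (iota 0 j))
  = opp_signs a (first_nonzero t).
Proof.
elim: t => [|b t IH]; first by rewrite big_geq //; case: a.
rewrite /= big_nat_recl //=.
under eq_bigr => j _ do rewrite all_iota_entry_cons.
case: b => /=; [|by rewrite -IH; case: (a)|];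
  by rewrite big1 ?addn0 ?andbT // => j _; rewrite andbF.
Qed.

Lemma SC_cons a t : SC (a :: t) = opp_signs a (first_nonzero t) + SC t.
Proof.
rewrite /SC /= big_nat_recl // big_geq // add0n.
under eq_bigr => j _ do rewrite big_nat_recl // subSS subn0 all_iota_entry_cons.
under eq_bigr => j _ do under eq_bigr => i _ do rewrite subSS all_iota_entry_cons.
by rewrite big_split /= sum_first_change.
Qed.

Lemma SC1 a : SC [:: a] = 0.
Proof. by rewrite SC_cons /SC big_geq //; case: a. Qed.

Lemma SC_Zero t : SC (Zero :: t) = SC t.
Proof. by rewrite SC_cons; case: first_nonzero. Qed.

Lemma SC_cons2 L b t :
  SC [:: L, b & t] = if b is Zero then SC (L :: t) else opp_signs L b + SC (b :: t).
Proof. by rewrite !SC_cons; case: b => //=; case: first_nonzero. Qed.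

Lemma compatible_cons s b t :
  compatible s (b :: t) <->
  (b = Minus \/ b = Zero \/ b = entry s 0) /\ compatible (behead s) t.
Proof.
split=> [Hc | [Hb Ht] [|i] //]; last by rewrite /entry /= -nth_behead; apply: Ht.
by split=> [|i]; [exact: (Hc 0) | rewrite /entry nth_behead; apply: (Hc i.+1)].
Qed.

(* [maxSC L s] is the largest SC (L :: t) over the t compatible with s; the
   base case places a single - after s. *)
Fixpoint maxSC (L : sign) (s : seq sign) : nat :=
  if s is a :: s' then
    let gain b := if b is Zero then maxSC L s' else opp_signs L b + maxSC b s' in
    maxn (gain Minus) (maxn (gain Zero) (gain a))
  else opp_signs L Minus.

Definition maxSC_gain (L b : sign) (s : seq sign) : nat :=
  if b is Zero then maxSC L s else opp_signs L b + maxSC b s.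

Lemma maxSC_cons L a s :
  maxSC L (a :: s) = maxn (maxSC_gain L Minus s) (maxn (maxSC_gain L Zero s) (maxSC_gain L a s)).
Proof. by []. Qed.

Lemma maxSC_gain_le L s b :
  b = Minus \/ b = Zero \/ b = entry s 0 -> maxSC_gain L b (behead s) <= maxSC L s.
Proof.
case: s => [|a s]; last first.
  by rewrite maxSC_cons; case=> [->|[->|->]]; rewrite !leq_max leqnn ?orbT.
by rewrite /entry /=; case=> [->|[->|->]] /=; rewrite ?addn0.
Qed.

Lemma SC_le_maxSC L s t : compatible s t -> SC (L :: t) <= maxSC L s.
Proof.
elim: t L s => [|b t IH] L s; first by rewrite SC1.
case/compatible_cons=> Hb Ht; apply: leq_trans (maxSC_gain_le L Hb).
by rewrite SC_cons2 /maxSC_gain; case: (b) => //; rewrite ?leq_add2l; apply: IH.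
Qed.

Lemma maxSC_attained L s : exists2 t, compatible s t & SC (L :: t) = maxSC L s.
Proof.
elim: s L => [|a s IH] L.
  exists (if L is Plus then [:: Minus] else [::]); last by case: L; rewrite ?SC_cons2 SC1.
  by case: L => /= -[|[|i]]; rewrite /entry /= ?nth_nil; auto.
have [b Hb ->] : exists2 b, b = Minus \/ b = Zero \/ b = a & maxSC L (a :: s) = maxSC_gain L b s.
  have [E|[E|E]] : maxSC L (a :: s) = maxSC_gain L Minus s \/ maxSC L (a :: s) = maxSC_gain L Zero s
      \/ maxSC L (a :: s) = maxSC_gain L a s by rewrite maxSC_cons; lia.
  - by exists Minus; [left|].
  - by exists Zero; [right; left|].
  - by exists a; [right; right|].
have [t Ht Et] := IH (if b is Zero then L else b).
exists (b :: t); first exact/compatible_cons.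
by rewrite SC_cons2 /maxSC_gain; case: (b) Et => ->.
Qed.

Lemma dfrak_is_maxSC s : dfrak_is s (maxSC Zero s).
Proof.
split=> [|t Ht]; last by rewrite -SC_Zero; apply: SC_le_maxSC.
by have [t Ht Et] := maxSC_attained Zero s; exists t; rewrite // -SC_Zero.
Qed.

Definition is_plus (a : sign) : bool := if a is Plus then true else false.

Definition lead_run (s : seq sign) : nat := find (fun a => ~~ is_plus a) s.

(* A + earns 2 exactly when the +'s right after it form a run of even length,
   so a run of l pluses earns 2⌈l/2⌉. *)
Fixpoint run_weight (s : seq sign) : nat :=
  if s is a :: s' then
    (if is_plus a && ~~ odd (lead_run s') then 2 else 0) + run_weight s'
  else 0.

Definition maxSC_splus (L : sign) (s : seq sign) : nat :=
  match L with
  | Minus => run_weight s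
  | Zero => run_weight s - odd (lead_run s)
  | Plus => run_weight s + 1 - 2 * odd (lead_run s)
  end.

Lemma in_Splus_cons a s : in_Splus (a :: s) -> a <> Minus /\ in_Splus s.
Proof. by move=> H; split=> [|i]; [move: (H 0); case: (a) | apply: (H i.+1)]. Qed.

Lemma odd_lead_run_weight s : odd (lead_run s) -> 2 <= run_weight s.
Proof. by case: s => [|[] s] //= ->. Qed.

Lemma maxSC_splusE s : in_Splus s -> forall L, maxSC L s = maxSC_splus L s.
Proof.
elim: s => [|a s IH] Hs L; first by case: L.
have [Ha {}/IH IH] := in_Splus_cons Hs; clear Hs.
rewrite maxSC_cons /maxSC_gain !IH /maxSC_splus /=.
have := @odd_lead_run_weight s.
by case: a Ha => // _ /=; case: (odd _); case: L => /=; lia.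
Qed.

Lemma count_iota_prefix (P : pred nat) a n r :
  r <= n -> (forall m, m < n -> P (a + m) = (m < r)) -> count P (iota a n) = r.
Proof.
move=> le_rn HP; rewrite -(subnKC le_rn) iotaD count_cat.
have HPx x : a <= x < a + n -> P x = (x < a + r).
  by case/andP=> le_ax lt_x; rewrite -(subnKC le_ax) HP ?ltn_add2l //; lia.
rewrite (@eq_in_count _ _ predT) ?count_predT ?size_iota; last first.
  by move=> x; rewrite mem_iota => /andP[le_ax lt_x]; rewrite HPx ?lt_x //; lia.
rewrite (@eq_in_count _ _ pred0) ?count_pred0 ?addn0 //.
by move=> x; rewrite mem_iota => /andP[le_x lt_x]; rewrite HPx ?ltnNge ?le_x //; lia.
Qed.

Lemma sum_even_suffix_count (P : pred nat) a d :
  \sum_(a <= p < a + d) (if P p && ~~ odd (count P (iota p.+1 (a + d - p.+1))) then 2 else 0)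
  = 2 * uphalf (count P (iota a d)).
Proof.
elim: d a => [|d IH] a; first by rewrite addn0 big_geq.
rewrite big_ltn ?addnS -?addSn ?IH; last lia.
have -> : a.+1 + d - a.+1 = d by lia.
rewrite /= !mul2n !uphalfK; case: (P a) => //=.
by case: odd => /=; lia.
Qed.

Lemma run_weight_sum s :
  run_weight s = \sum_(0 <= p < size s)
     (if is_plus (entry s p) && ~~ odd (lead_run (drop p.+1 s)) then 2 else 0).
Proof.
elim: s => [|a s IH]; first by rewrite big_geq.
by rewrite /= big_nat_recl // drop0 IH.
Qed.

Lemma lead_run_plus t j : j < lead_run t -> entry t j = Plus.
Proof. by move/(before_find Zero); rewrite /entry; case: nth. Qed.

Lemma lead_run_end t : ~~ is_plus (entry t (lead_run t)).
Proof.
rewrite /entry /lead_run; have [/(nth_find Zero) //|] := boolP (has (fun a => ~~ is_plus a) t).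
by rewrite has_find -leqNgt => /(nth_default Zero) ->.
Qed.

Lemma lead_run_first t : is_plus (entry t 0) -> lead_run t = (lead_run (drop 1 t)).+1.
Proof. by case: t => [|[] t] //; rewrite /= drop0. Qed.

Lemma supp_is_plus s x : in_Splus s -> supp s x = is_plus (entry s x).
Proof. by move/(_ x); rewrite /supp; case: entry. Qed.

Section IntervalDecomposition.

Variables (s : seq sign) (k : nat) (X : nat -> pred nat).
Hypotheses (Hs : in_Splus s) (D : interval_decomposition s k X).

Lemma block_supp i x : i <= k -> X i x -> supp s x.
Proof. by have [_ [HX _ _ _ _]] := D; move=> le_ik Xx; apply/HX; exists i. Qed.

Lemma supp_block x : supp s x -> exists2 i, i <= k & X i x.
Proof. by have [_ [HX _ _ _ _]] := D; move/HX. Qed.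

Lemma block_gap i j x y : j < i <= k -> X i x -> X j y -> y + 2 <= x.
Proof.
have [_ [_ _ _ Hne Hgap]] := D.
elim: i x => [|i IH] x // /andP[lt_ji le_ik] Xx Yy.
have Hgap' z : X i z -> z + 2 <= x by apply: (Hgap i.+1) => //; lia.
have [eq_ji|lt_ji'] := eqVneq j i; first by rewrite -eq_ji in Hgap'; apply: Hgap'.
have [z Xz] : exists z, X i z by apply: Hne; lia.
have := IH z ltac:(lia) Xz Yy; have := Hgap' z Xz; lia.
Qed.

Lemma block_eq i j x y :
  i <= k -> j <= k -> X i x -> X j y -> x <= y.+1 -> y <= x.+1 -> i = j.
Proof.
move=> le_ik le_jk Xx Yy le_xy le_yx.
have [lt_ij|lt_ji|//] := ltngtP i j.
- by have := @block_gap j i y x ltac:(lia) Yy Xx; lia.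
- by have := @block_gap i j x y ltac:(lia) Xx Yy; lia.
Qed.

Lemma block_after i p m :
  i <= k -> X i p -> X i (p.+1 + m) = (m < lead_run (drop p.+1 s)).
Proof.
move=> le_ik Xp; set r := lead_run (drop p.+1 s).
have run_supp j : j < r -> supp s (p.+1 + j).
  by move/lead_run_plus; rewrite supp_is_plus // /entry nth_drop => ->.
have run_end : ~~ supp s (p.+1 + r).
  by have := lead_run_end (drop p.+1 s); rewrite supp_is_plus // /entry nth_drop.
have in_run j : j <= r -> X i (p + j).
  elim: j => [|j IH] le_jr; first by rewrite addn0.
  have [i' le_i'k Xi'] := supp_block (run_supp j le_jr).
  have <- : i' = i by apply: (block_eq le_i'k le_ik Xi' (IH (ltnW le_jr))); lia.
  by rewrite addnS -addSn.
apply/idP/idP => [Xm|lt_mr]; last by move: (in_run m.+1 lt_mr); rewrite addnS -addSn.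
rewrite ltnNge; apply: contra run_end => le_rm.
have [Hint _] := D; apply: (block_supp le_ik).
by apply: (Hint i le_ik p _ (p.+1 + m)) => //; lia.
Qed.

Lemma count_block_after i p : i <= k -> X i p ->
  count (X i) (iota p.+1 (size s - p.+1)) = lead_run (drop p.+1 s).
Proof.
move=> le_ik Xp; apply: count_iota_prefix => [|m _]; last exact: block_after.
by rewrite -size_drop find_size.
Qed.

Lemma run_weight_blocks :
  run_weight s = \sum_(0 <= i < k.+1) 2 * uphalf (card_in s (X i)).
Proof.
under [RHS]eq_bigr => i _ do rewrite /card_in -(sum_even_suffix_count (X i) 0).
rewrite run_weight_sum exchange_big_nat; apply: eq_big_nat => p _ /=.
rewrite -supp_is_plus //; have [/supp_block[i0 le_i0k Xp]|not_supp] := boolP (supp s p).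
  rewrite (bigD1_seq i0) ?mem_index_iota ?iota_uniq //= Xp count_block_after //.
  rewrite big1_seq ?addn0 // => i /andP[ne_ii0]; rewrite mem_index_iota => lt_ik.
  case Xi: (X i p) => //; case/negP: ne_ii0.
  by apply/eqP/(block_eq _ le_i0k Xi Xp) => //; lia.
rewrite big1_seq // => i /andP[_]; rewrite mem_index_iota => lt_ik.
by case Xi: (X i p) => //; case/negP: not_supp; apply: (block_supp _ Xi); lia.
Qed.

Lemma card_block0 : card_in s (X 0) = lead_run s.
Proof.
have [_ [_ _ HX0 _ _]] := D.
apply: count_iota_prefix => [|m _]; first exact: find_size.
case/boolP: (supp s 0) HX0 => [s0 X00|not_s0 X0_empty]; last first.
  have : ~~ (0 < lead_run s).
    by apply: contra not_s0 => /lead_run_plus; rewrite supp_is_plus // => ->.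
  by rewrite lt0n negbK (negbTE (X0_empty _)) => /eqP ->; rewrite ltn0.
have -> : lead_run s = (lead_run (drop 1 s)).+1.
  by apply: lead_run_first; rewrite -supp_is_plus.
by case: m => [|m] //; rewrite ltnS -(block_after _ (leq0n k) X00).
Qed.

End IntervalDecomposition.

Theorem mainTheorem2 (s : seq sign) (k : nat) (X : nat -> pred nat) :
  in_Splus s ->
  interval_decomposition s k X ->
  dfrak_is s (card_in s (X 0) +
              \sum_(1 <= i < k.+1) 2 * uphalf (card_in s (X i))).
Proof.
move=> Hs D.
suff -> : card_in s (X 0) + \sum_(1 <= i < k.+1) 2 * uphalf (card_in s (X i))
          = maxSC Zero s by apply: dfrak_is_maxSC.
rewrite (maxSC_splusE Hs) /maxSC_splus (run_weight_blocks Hs D) (@big_ltn _ _ _ 0) //.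
by rewrite -(card_block0 Hs D) mul2n uphalfK -addnA addKn.
Qed.
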